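(* Let $f_1,\ldots,f_{i+1}\in R$, $I_i=\langle f_1,\ldots,f_i\rangle$, $I_{i+1}=\langle f_1,\ldots,f_{i+1}\rangle$ with $f_{i+1}\notin I_i$. Let $g_1,\ldots,g_M\in I_i$ be such that $\{g_1,\ldots,g_M\}$ is a Gröbner basis of $I_i$, let $p_1,\ldots,p_\ell\in I_{i+1}\setminus\{0\}$, $d_1,\ldots,d_\ell\in\mathbb{k}\setminus\{0\}$, $\tau_1,\ldots,\tau_\ell\in\mathbb{M}$, and let $$G=\{(\sigma_1\mathbf{e}_{j_1},g_1),\ldots,(\sigma_M\mathbf{e}_{j_M},g_M)\}\cup\{(\mathbf{e}_{i+1},f_{i+1}),(d_1\tau_1\mathbf{e}_{i+1},p_1),\ldots,(d_\ell\tau_\ell\mathbf{e}_{i+1},p_\ell)\}$$ with $j_1,\ldots,j_M\le i$. Assume that for every $(c\sigma\mathbf{e}_j,g)\in G$ one has $c\sigma\mathbf{e}_j\in\mathrm{sig}(g)$ and $\sigma\mathbf{e}_j=\mathrm{minsig}(g)$. Assume further that for every two elements $(c\sigma\mathbf{e}_{i+1},p),(d\tau\mathbf{e}_j,q)\in G$ with $p\ne q$, writing $u=t_{p,q}/t_p$ and $v=t_{p,q}/t_q$ and assuming $u\sigma\mathbf{e}_{i+1}\succeq v\tau\mathbf{e}_j$, one of the following holds: (i) $u\sigma\mathbf{e}_{i+1}=v\tau\mathbf{e}_j$ (as monic monomial signatures, i.e. $j=i+1$ and $u\sigma=v\tau$); or (ii) $u\sigma\mathbf{e}_{i+1}\succ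 v\tau\mathbf{e}_j$ and $(u\sigma\mathbf{e}_{i+1},\mathrm{S}(p,q))$ has a standard representation with respect to $G$. Then $\widehat G=\{g:(c\sigma\mathbf{e}_j,g)\in G\text{ for some } c\sigma\mathbf{e}_j\}$ is a Gröbner basis of $I_{i+1}$.
   Context: $R=\mathbb{k}[x_1,\ldots,x_n]$ over a field $\mathbb{k}$, $\mathbb{M}$ its monoid of monomials, $<$ a degree-compatible monomial ordering. For nonzero $p$: $t_p=\mathrm{lm}(p)$ (leading monomial), $c_p=\mathrm{lc}(p)$ (leading coefficient), $t_{p,q}=\mathrm{lcm}(t_p,t_q)$. The S-polynomial is $\mathrm{S}(p,q)=\frac{t_{p,q}}{t_p}p-\frac{c_p}{c_q}\frac{t_{p,q}}{t_q}q$. A standard representation of $s\in R$ with respect to a finite list $(g_1,\ldots,g_N)$ of polynomials is a tuple $(h_1,\ldots,h_N)$ in $R^N$ with $s=\sum h_kg_k$ and, for each $k$, $h_k=0$ or $\mathrm{lm}(h_k)\mathrm{lm}(g_k)\le\mathrm{lm}(s)$. Signatures: $\mathbf{e}_1,\ldots,\mathbf{e}_{i+1}$ are the canonical generators of $R^{i+1}$; a signature is a formal expression $c\tau\mathbf{e}_j$ ($c\in\mathbb{k}\setminus\{0\}$, $\tau\in\mathbb{M}$). For $p\in I_{i+1}$, if $p=h_1f_1+\cdots+h_jf_j$ with $j\le i+1$ and $h_j\ne0$, then $\mathrm{lc}(h_j)\mathrm{lm}(h_j)\mathbf{e}_j$ is a signature of $p$; $\mathrm{sig}(p)$ is the set of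 all of them. Order: $c\sigma\mathbf{e}_j\prec d\tau\mathbf{e}_k$ iff $j<k$, or $j=k$ and $\sigma<\tau$ (restricted to monic monomial signatures $\tau\mathbf{e}_j$ this is a well-ordering). $\mathrm{minsig}(p)$ is the unique $\prec$-minimal monic signature $\tau\mathbf{e}_j$ of $p$ (i.e. with $1\cdot\tau\mathbf{e}_j\in\mathrm{sig}(p)$). Signature standard representation: let $G=\{(c_k\mu_k\mathbf{e}_{j_k},g_k)\}_{k=1}^N$ be a finite set of pairs with $g_k\in I_{i+1}$ and $\mu_k\mathbf{e}_{j_k}=\mathrm{minsig}(g_k)$. A pair $(c\sigma\mathbf{e}_{i+1},s)$ with $s\in I_{i+1}$ has a standard representation with respect to $G$ if $c\sigma\mathbf{e}_{i+1}\in\mathrm{sig}(s)$ and there exist $h_1,\ldots,h_N\in R$ such that $(h_1,\ldots,h_N)$ is a standard representation of $s$ with respect to $(g_1,\ldots,g_N)$ and, for each $k$, $h_k=0$ or $\mathrm{lm}(h_k)\,\mathrm{minsig}(g_k)\preceq\sigma\mathbf{e}_{i+1}$ (where $t\cdot\mu\mathbf{e}_j=(t\mu)\mathbf{e}_j$). *)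

From HB Require Import structures.
From mathcomp Require Import all_boot all_order all_algebra.
From mathcomp.multinomials Require Import mpoly.

Set Implicit Arguments.
Unset Strict Implicit.
Unset Printing Implicit Defensive.
Import Order.TTheory GRing.Theory.
Local Open Scope ring_scope.

(* Monomial orderings on 'X_{1..n} (monomials; multiplication of      *)
(* monomials is written additively: m1 + m2).                          *)
Record monomial_order (n : nat) := MonomialOrder {
  mo_le : rel 'X_{1..n};
  mo_refl : reflexive mo_le;
  mo_anti : antisymmetric mo_le;
  mo_trans : transitive mo_le;
  mo_total : total mo_le;
  mo_mul : forall m1 m2 m : 'X_{1..n}, mo_le m1 m2 -> mo_le (m1 + m)%MM (m2 + m)%MM;
  mo_wf : well_founded (fun a b : 'X_{1..n} => mo_le a b && (a != b))
}.

Definition mo_lt n (O : monomial_order n) (a b : 'X_{1..n}) :=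
  mo_le O a b && (a != b).

Definition degree_compatible n (O : monomial_order n) :=
  forall a b : 'X_{1..n}, (mdeg a < mdeg b)%N -> mo_lt O a b.

Section Poly.
Variables (K : fieldType) (n : nat) (O : monomial_order n).
Local Notation poly := {mpoly K[n]}.
Local Notation mon := 'X_{1..n}.

(* leading monomial: the O-maximum of the support (0%MM for p = 0) *)
Definition lm (p : poly) : mon :=
  foldr (fun m acc => if mo_le O acc m then m else acc) 0%MM (msupp p).
Definition lc (p : poly) : K := p@_(lm p).

Definition spoly (p q : poly) : poly :=
  let t := mlcm (lm p) (lm q) in
  'X_[(t - lm p)%MM] * p - (lc p / lc q) *: ('X_[(t - lm q)%MM] * q).

(* The ideal <f_1, ..., f_N> (generators indexed from 1). *)
Definition in_ideal (f : nat -> poly) (N : nat) (p : poly) : Prop :=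
  exists h : nat -> poly, p = \sum_(1 <= k < N.+1) h k * f k.

Definition is_GB (I : poly -> Prop) (G : seq poly) : Prop :=
  (forall g, g \in G -> I g) /\
  (forall p, I p -> p != 0 ->
     exists2 g, g \in G & (g != 0) && (lm g <= lm p)%MM).

(* c tau e_j \in sig(p), for p in I_N = <f_1,...,f_N> (so 1 <= j <= N) *)
Definition in_sig (f : nat -> poly) (N : nat) (p : poly) (c : K) (tau : mon)
    (j : nat) : Prop :=
  [/\ (1 <= j)%N, (j <= N)%N &
   exists h : nat -> poly,
     [/\ p = \sum_(1 <= k < j.+1) h k * f k, h j != 0,
         lc (h j) = c & lm (h j) = tau]].

(* order on monic monomial signatures tau e_j *)
Definition sig_le (s1 s2 : mon * nat) : bool :=
  (s1.2 < s2.2)%N || ((s1.2 == s2.2) && mo_le O s1.1 s2.1).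
Definition sig_lt (s1 s2 : mon * nat) : bool :=
  (s1.2 < s2.2)%N || ((s1.2 == s2.2) && mo_lt O s1.1 s2.1).

Definition is_minsig (f : nat -> poly) (N : nat) (p : poly) (tau : mon)
    (j : nat) : Prop :=
  in_sig f N p 1 tau j /\
  forall tau' j', in_sig f N p 1 tau' j' -> sig_le (tau, j) (tau', j').

(* Elements (c mu e_j, g) of a set G of signature/polynomial pairs. *)
Record sentry := SEntry {
  ecoef : K; emon : mon; eidx : nat; epol : poly }.

Definition sentry0 := SEntry 0 0%MM 0 0.

(* (c sigma e_N, s) has a standard representation w.r.t. G (inside I_N).
   The monic signature minsig(g_k) is the stored mu_k e_{j_k}. *)
Definition std_rep (f : nat -> poly) (N : nat) (G : seq sentry)
    (c : K) (sigma : mon) (s : poly) : Prop :=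
  in_sig f N s c sigma N /\
  exists h : 'I_(size G) -> poly,
    s = \sum_(k < size G) h k * epol (nth sentry0 G k) /\
    forall k : 'I_(size G),
      h k = 0 \/
      (mo_le O (lm (h k) + lm (epol (nth sentry0 G k)))%MM (lm s) /\
       sig_le ((lm (h k) + emon (nth sentry0 G k))%MM, eidx (nth sentry0 G k))
              (sigma, N)).

End Poly.

(* Write P in I_(i+1) as P = h f_(i+1) modulo I_i.  By well-founded induction
   on a monomial T bounding the support of h, some g in G top-reduces P by a
   multiple (lm P / lm g) g of signature at most T e_(i+1); in particular G is a
   Groebner basis.  If h has no term T, the Groebner basis of I_i (when h = 0)
   or the induction hypothesis applies.  Otherwise subtract from P the multiple
   of an element g of index i+1 with sig g | T (initially f_(i+1)) that cancels
   the term T of h.  Unless this already top-reduces P, the difference is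
   top-reduced by some r of smaller signature, and the standard representation
   of S(g, r) either rewrites P with a cofactor below T, or produces a new g'
   with sig g' | T whose multiple has a smaller leading monomial: a second
   well-founded induction. *)

From HB Require Import structures.
From mathcomp Require Import all_boot all_order all_algebra.
From mathcomp.multinomials Require Import mpoly.
From mathcomp Require Import zify ring.
Import GRing.Theory.
Local Open Scope ring_scope.
Set Implicit Arguments.
Unset Strict Implicit.
Unset Printing Implicit Defensive.

Section MonomialOrder.
Variables (n : nat) (O : monomial_order n).
Local Notation mon := 'X_{1..n}.
Local Notation le := (mo_le O).
Local Notation lt := (mo_lt O).
Implicit Types a b c m : mon.

Lemma mo_le_refl a : le a a. Proof. exact: mo_refl. Qed.

Lemma mo_le_trans a b c : le a b -> le b c -> le a c.
Proof. exact: mo_trans. Qed.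

Lemma mo_le_anti a b : le a b -> le b a -> a = b.
Proof. by move=> ab ba; apply: (@mo_anti n O); rewrite ab ba. Qed.

Lemma mo_leVge a b : le a b \/ le b a.
Proof. exact/orP/mo_total. Qed.

Lemma mo_ltW a b : lt a b -> le a b. Proof. by case/andP. Qed.

Lemma mo_lt_irr a : ~ lt a a. Proof. by rewrite /mo_lt eqxx andbF. Qed.

Lemma mo_lt_neqAle a b : lt a b = (a != b) && le a b.
Proof. by rewrite /mo_lt andbC. Qed.

Lemma mo_lt_le_trans a b c : lt a b -> le b c -> lt a c.
Proof.
move=> /andP[ab nab] bc; rewrite /mo_lt (mo_le_trans ab bc).
by apply: contra nab => /eqP ac; rewrite -ac in bc; rewrite (mo_le_anti ab bc).
Qed.

Lemma mo_le_lt_trans a b c : le a b -> lt b c -> lt a c.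
Proof.
move=> ab /andP[bc nbc]; rewrite /mo_lt (mo_le_trans ab bc).
by apply: contra nbc => /eqP ac; rewrite ac in ab; rewrite (mo_le_anti bc ab).
Qed.

Lemma mo_lt_geF a b : lt a b -> le b a -> False.
Proof. by move=> ab ba; apply: mo_lt_irr (mo_lt_le_trans ab ba). Qed.

Lemma mo_leD2r c a b : le (a + c)%MM (b + c)%MM = le a b.
Proof.
apply/idP/idP; last exact: mo_mul.
move=> le_ac_bc; have [//|ba] := mo_leVge a b.
by rewrite (addIm (mo_le_anti le_ac_bc (mo_mul c ba))) mo_le_refl.
Qed.

Lemma mo_leD2l c a b : le (c + a)%MM (c + b)%MM = le a b.
Proof. by rewrite ![(c + _)%MM]addmC mo_leD2r. Qed.

Lemma mo_ltD2l c a b : lt (c + a)%MM (c + b)%MM = lt a b.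
Proof. by rewrite /mo_lt mo_leD2l eqm_add2l. Qed.

(* A monomial below 0 would yield the infinite descent m > 2m > 4m > ... *)
Lemma mo_ge0 m : le 0%MM m.
Proof.
suff le0_eq0 m' : le m' 0%MM -> m' = 0%MM.
  by have [//|/le0_eq0 ->] := mo_leVge 0%MM m; apply: mo_le_refl.
elim/(well_founded_induction (mo_wf O)): m' => a IH a_le0.
have [//|a_neq0] := eqVneq a 0%MM.
have aa_le_a : le (a + a)%MM a by rewrite -[X in le _ X]add0m mo_leD2r.
have aa_neq_a : (a + a)%MM != a by rewrite -[X in _ != X]add0m eqm_add2r.
have /mnmP aa0 :=
  IH _ (introT andP (conj aa_le_a aa_neq_a)) (mo_le_trans aa_le_a a_le0).
by apply/mnmP => x; have := aa0 x; rewrite !mnmE; lia.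
Qed.

Lemma sig_ltW s1 s2 : sig_lt O s1 s2 -> sig_le O s1 s2.
Proof. by rewrite /sig_lt /sig_le => /orP[->//|/andP[-> /mo_ltW ->]]; rewrite orbT. Qed.

Lemma sig_lt_irr s : ~ sig_lt O s s.
Proof. by rewrite /sig_lt ltnn eqxx => /mo_lt_irr. Qed.

End MonomialOrder.

Section LeadingMonomial.
Variables (K : fieldType) (n : nat) (O : monomial_order n).
Local Notation poly := {mpoly K[n]}.
Local Notation mon := 'X_{1..n}.
Local Notation le := (mo_le O).
Local Notation lt := (mo_lt O).
Local Notation lm := (lm O).
Implicit Types (p q : poly) (m w A B T : mon).

Lemma lm_max_seq (s : seq mon) :
  let top := foldr (fun m acc => if le acc m then m else acc) 0%MM s in
  {in s, forall m, le m top} /\ (s != [::] -> top \in s).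
Proof.
elim: s => [//|x s [IHle IHin]] /=; set top := foldr _ _ s in IHle IHin *.
case: ifP => [top_le_x|x_lt_top].
  split=> [m|]; last by rewrite mem_head.
  rewrite in_cons => /predU1P[->|/IHle m_le]; first exact: mo_le_refl.
  exact: mo_le_trans m_le top_le_x.
have x_le_top : le x top by have [|//] := mo_leVge O top x; rewrite x_lt_top.
split=> [m|_]; first by rewrite in_cons => /predU1P[->|/IHle].
have [s0|s_neq0] := eqVneq s [::]; last by rewrite in_cons IHin ?orbT.
by move: x_lt_top; rewrite /top s0 /= mo_ge0.
Qed.

Lemma lm_ge p m : m \in msupp p -> le m (lm p).
Proof. exact: (lm_max_seq (msupp p)).1. Qed.

Lemma lm_msupp p : p != 0 -> lm p \in msupp p.
Proof. by move=> p_neq0; apply: (lm_max_seq (msupp p)).2; rewrite msupp_eq0. Qed.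

Lemma lc_neq0 p : p != 0 -> lc O p != 0.
Proof. by move=> p_neq0; rewrite /lc -mcoeff_msupp lm_msupp. Qed.

Definition msupp_le p T := all (fun m => le m T) (msupp p).
Definition msupp_lt p T := all (fun m => lt m T) (msupp p).

Lemma all_msupp0 (P : pred mon) : all P (msupp (0 : poly)).
Proof. by rewrite msupp0. Qed.

Lemma all_msuppD (P : pred mon) p q :
  all P (msupp p) -> all P (msupp q) -> all P (msupp (p + q)).
Proof.
move=> /allP Pp /allP Pq; apply/allP => m /msuppD_le.
by rewrite mem_cat => /orP[/Pp|/Pq].
Qed.

Lemma all_msuppN (P : pred mon) p : all P (msupp (- p)) = all P (msupp p).
Proof. exact/eq_all_r/perm_mem/msuppN. Qed.

Lemma all_msuppB (P : pred mon) p q :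
  all P (msupp p) -> all P (msupp q) -> all P (msupp (p - q)).
Proof. by move=> Pp Pq; apply: all_msuppD; rewrite ?all_msuppN. Qed.

Lemma all_msuppZ (P : pred mon) c p : all P (msupp p) -> all P (msupp (c *: p)).
Proof. by move=> /allP Pp; apply/allP => m /msuppZ_le /Pp. Qed.

Lemma all_msupp_sum (P : pred mon) (I : finType) (F : I -> poly) :
  (forall k, all P (msupp (F k))) -> all P (msupp (\sum_k F k)).
Proof.
move=> PF; apply: (big_ind (fun x => all P (msupp x))) => //.
  exact: all_msupp0.
exact: all_msuppD.
Qed.

Lemma msupp_le_lm p : msupp_le p (lm p). Proof. exact/allP/lm_ge. Qed.

Lemma msupp_le_trans p A B : msupp_le p A -> le A B -> msupp_le p B.
Proof. by move=> /allP pA AB; apply/allP => m /pA mA; apply: mo_le_trans mA AB. Qed.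

Lemma msupp_le_lt_trans p A B : msupp_le p A -> lt A B -> msupp_lt p B.
Proof. by move=> /allP pA AB; apply/allP => m /pA mA; apply: mo_le_lt_trans mA AB. Qed.

Lemma lm_le p T : p != 0 -> msupp_le p T -> le (lm p) T.
Proof. by move=> p_neq0 /allP; apply; apply: lm_msupp. Qed.

Lemma lm_lt p T : p != 0 -> msupp_lt p T -> lt (lm p) T.
Proof. by move=> p_neq0 /allP; apply; apply: lm_msupp. Qed.

Lemma msupp_lt_mcoeff0 p T : msupp_le p T -> p@_T = 0 -> msupp_lt p T.
Proof.
move=> /allP pT pT0; apply/allP => m mp; rewrite mo_lt_neqAle pT // andbT.
by apply: contraTneq mp => ->; rewrite mcoeff_msupp pT0 eqxx.
Qed.

Lemma lm_eq p T : msupp_le p T -> p@_T != 0 -> lm p = T.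
Proof.
move=> pT pT_neq0.
have p_neq0 : p != 0 by apply: contraNneq pT_neq0 => ->; rewrite mcoeff0.
by apply: mo_le_anti (lm_le p_neq0 pT) (lm_ge _); rewrite mcoeff_msupp.
Qed.

Lemma mcoeff_gt_lm p m : lt (lm p) m -> p@_m = 0.
Proof.
move=> lm_lt_m; apply/eqP; apply: contraT; rewrite -mcoeff_msupp.
by move=> /lm_ge /(mo_lt_geF lm_lt_m).
Qed.

Lemma msupp_leM p q A B :
  msupp_le p A -> msupp_le q B -> msupp_le (p * q) (A + B)%MM.
Proof.
move=> /allP pA /allP qB; apply/allP => m /msuppM_le /allpairsP[[a b] /= [ap bq ->]].
apply: (@mo_le_trans _ _ _ (A + b)%MM); rewrite ?mo_leD2r ?mo_leD2l.
  exact: pA.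
exact: qB.
Qed.

Lemma msupp_leXM w p T : msupp_le p T -> msupp_le ('X_[w] * p) (w + T)%MM.
Proof. by apply: msupp_leM; rewrite /msupp_le msuppX /= mo_le_refl. Qed.

Lemma msupp_ltXM w p T : msupp_lt p T -> msupp_lt ('X_[w] * p) (w + T)%MM.
Proof.
move=> /allP pT; apply/allP => m /msuppM_le /allpairsP[[a b] /= [+ bp ->]].
by rewrite msuppX mem_seq1 => /eqP ->; rewrite mo_ltD2l; apply: pT.
Qed.

Lemma lm0 : lm (0 : poly) = 0%MM. Proof. by rewrite /lm msupp0. Qed.

Lemma lm_mpolyX w : lm ('X_[w] : poly) = w.
Proof.
by apply: lm_eq; rewrite ?mcoeffX ?eqxx ?oner_neq0 // /msupp_le msuppX /= mo_le_refl.
Qed.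

Lemma mcoeffXM w p m : ('X_[w] * p)@_(w + m) = p@_m.
Proof. by rewrite -commr_mpolyX mcoeffMX. Qed.

Lemma lmXM w p : p != 0 -> lm ('X_[w] * p) = (w + lm p)%MM.
Proof.
move=> p_neq0; apply: lm_eq; first exact/msupp_leXM/msupp_le_lm.
by rewrite mcoeffXM lc_neq0.
Qed.

Lemma lmZ c p : c != 0 -> lm (c *: p) = lm p.
Proof.
move=> c_neq0; have [->|p_neq0] := eqVneq p 0; first by rewrite scaler0.
apply: lm_eq; first exact/all_msuppZ/msupp_le_lm.
by rewrite mcoeffZ mulf_neq0 ?lc_neq0.
Qed.

Lemma lm_gt_neq0 p m : lt m (lm p) -> p != 0.
Proof.
by apply: contraTneq => ->; rewrite lm0; apply/negP => /mo_lt_geF; apply; apply: mo_ge0.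
Qed.

Lemma lmBl p q : lt (lm q) (lm p) -> lm (p - q) = lm p.
Proof.
move=> qp; have p_neq0 := lm_gt_neq0 qp.
apply: lm_eq.
  by apply: all_msuppB (msupp_le_lm p) (msupp_le_trans (msupp_le_lm q) (mo_ltW qp)).
by rewrite mcoeffB (mcoeff_gt_lm qp) subr0 lc_neq0.
Qed.

Lemma lmBr p q : lt (lm p) (lm q) -> lm (p - q) = lm q.
Proof.
by move=> pq; rewrite -opprB -scaleN1r lmZ ?oppr_eq0 ?oner_eq0 ?lmBl.
Qed.

Lemma msupp_lt_spoly p q : q != 0 -> msupp_lt (spoly O p q) (mlcm (lm p) (lm q)).
Proof.
move=> q_neq0; set t := mlcm _ _.
have tp : (t - lm p + lm p)%MM = t by rewrite submK ?lem_mlcml.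
have tq : (t - lm q + lm q)%MM = t by rewrite submK ?lem_mlcmr.
have Xp : msupp_le ('X_[t - lm p] * p) t.
  by rewrite -[X in msupp_le _ X]tp; apply/msupp_leXM/msupp_le_lm.
have Xq : msupp_le ('X_[t - lm q] * q) t.
  by rewrite -[X in msupp_le _ X]tq; apply/msupp_leXM/msupp_le_lm.
apply: msupp_lt_mcoeff0; first exact: all_msuppB Xp (all_msuppZ _ Xq).
rewrite mcoeffB mcoeffZ -[X in _@_X - _]tp -[X in _ * _@_X]tq !mcoeffXM.
by rewrite divfK ?subrr ?lc_neq0.
Qed.

End LeadingMonomial.

Section Ideals.
Variables (K : fieldType) (n : nat) (O : monomial_order n) (f : nat -> {mpoly K[n]}).
Local Notation poly := {mpoly K[n]}.
Implicit Types (p q : poly) (N : nat).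

Lemma in_ideal0 N : in_ideal f N 0.
Proof. by exists (fun=> 0); rewrite big1 // => k _; rewrite mul0r. Qed.

Lemma in_idealD N p q : in_ideal f N p -> in_ideal f N q -> in_ideal f N (p + q).
Proof.
move=> [hp ->] [hq ->]; exists (fun k => hp k + hq k).
by rewrite -big_split; apply: eq_bigr => k _; rewrite mulrDl.
Qed.

Lemma in_idealMl N a p : in_ideal f N p -> in_ideal f N (a * p).
Proof.
move=> [h ->]; exists (fun k => a * h k).
by rewrite mulr_sumr; apply: eq_bigr => k _; rewrite mulrA.
Qed.

Lemma in_idealZ N c p : in_ideal f N p -> in_ideal f N (c *: p).
Proof. by rewrite -mul_mpolyC; apply: in_idealMl. Qed.

Lemma in_idealB N p q : in_ideal f N p -> in_ideal f N q -> in_ideal f N (p - q).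
Proof. by move=> Ip Iq; rewrite -scaleN1r; apply/in_idealD/in_idealZ. Qed.

Lemma in_ideal_sum N (I : finType) (F : I -> poly) :
  (forall k, in_ideal f N (F k)) -> in_ideal f N (\sum_k F k).
Proof.
move=> IF; apply: (big_ind (in_ideal f N)) => //; first exact: in_ideal0.
exact: in_idealD.
Qed.

Lemma in_ideal_widen j N p : (j <= N)%N -> in_ideal f j p -> in_ideal f N p.
Proof.
move=> jN [h ->]; exists (fun k => if (k <= j)%N then h k else 0).
rewrite [RHS](big_cat_nat _ (n := j.+1)) //= [X in _ + X]big1_seq ?addr0.
  by apply: eq_big_nat => k /andP[_]; rewrite ltnS => ->.
by move=> k /andP[_]; rewrite mem_index_iota => /andP[jk _]; rewrite leqNgt jk mul0r.
Qed.

Lemma in_ideal_succ N p :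
  in_ideal f N.+1 p -> exists h, in_ideal f N (p - h * f N.+1).
Proof.
by move=> [h ->]; exists (h N.+1); exists h; rewrite big_nat_recr //= addrK.
Qed.

Lemma in_sig_ideal N p c tau j : in_sig O f N p c tau j -> in_ideal f N p.
Proof. by move=> [_ jN [h [-> _ _ _]]]; apply: in_ideal_widen jN _; exists h. Qed.

Lemma in_sig_cofactor N p c tau j : in_sig O f N.+1 p c tau j ->
  exists h, [/\ in_ideal f N (p - h * f N.+1),
    j = N.+1 -> h != 0 /\ lm O h = tau & j <> N.+1 -> h = 0].
Proof.
move=> [j_ge1 jN [h [p_def hj_neq0 _ hj_lm]]].
have [jE|j_neqN1] := eqVneq j N.+1.
  subst j; exists (h N.+1); split=> //.
  by exists h; rewrite p_def big_nat_recr //= addrK.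
exists 0; split=> //; last by move/eqP: j_neqN1.
rewrite mul0r subr0; apply: (in_ideal_widen (j := j)); last by exists h.
by rewrite -ltnS ltn_neqAle j_neqN1.
Qed.

Lemma is_minsig_uniq N p tau j tau' j' :
  is_minsig O f N p tau j -> is_minsig O f N p tau' j' -> tau = tau' /\ j = j'.
Proof.
move=> [sig min] [sig' min']; have := min _ _ sig'; have := min' _ _ sig.
rewrite /sig_le /=; case: ltngtP => //= -> le' le.
by split; first exact: mo_le_anti le le'.
Qed.

End Ideals.

Section EntrySeq.
Variables (K : fieldType) (n : nat) (O : monomial_order n) (G : seq (sentry K n)).
Local Notation E k := (nth (sentry0 K n) G k).

Lemma is_GB_entries (I : {mpoly K[n]} -> Prop) :
  (forall k : 'I_(size G), I (epol (E k))) ->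
  (forall P, I P -> P != 0 ->
     exists k : 'I_(size G), epol (E k) != 0 /\ (lm O (epol (E k)) <= lm O P)%MM) ->
  is_GB O I [seq epol e | e <- G].
Proof.
move=> IG reducible; split=> [_ /(nthP 0)[k k_lt <-]|P IP P_neq0].
  rewrite size_map in k_lt; rewrite (nth_map (sentry0 K n)) //.
  exact: (IG (Ordinal k_lt)).
have [k [k_neq0 k_div]] := reducible P IP P_neq0.
exists (epol (E k)); last by rewrite k_neq0 k_div.
by apply/(nthP 0); exists k; rewrite ?size_map // (nth_map (sentry0 K n)).
Qed.

Lemma minsig_entries_uniq f N :
  (forall k : 'I_(size G), is_minsig O f N (epol (E k)) (emon (E k)) (eidx (E k))) ->
  forall k1 k2 : 'I_(size G), epol (E k1) = epol (E k2) ->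
  emon (E k1) = emon (E k2) /\ eidx (E k1) = eidx (E k2).
Proof.
move=> minsig k1 k2 eq12; have min1 := minsig k1; rewrite eq12 in min1.
exact: is_minsig_uniq min1 (minsig k2).
Qed.

End EntrySeq.

Section SignatureCriterion.
Variables (K : fieldType) (n : nat) (O : monomial_order n).
Variables (f : nat -> {mpoly K[n]}) (i : nat) (G : seq (sentry K n)).
Variable hf : 'I_(size G) -> {mpoly K[n]}.
Local Notation poly := {mpoly K[n]}.
Local Notation mon := 'X_{1..n}.
Local Notation le := (mo_le O).
Local Notation lt := (mo_lt O).
Local Notation lm := (lm O).
Local Notation E k := (nth (sentry0 K n) G k).
Local Notation gp k := (epol (E k)).
Local Notation sm k := (emon (E k)).
Local Notation sj k := (eidx (E k)).
Implicit Types (P h a : poly) (T L w : mon) (k kq kr : 'I_(size G)).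

(* [hf k] is the coefficient of f_(i+1) in a representation of g_k realising
   its signature; a cofactor h of P gives P the signature lm h e_(i+1). *)
Definition is_cofactor P h := in_ideal f i (P - h * f i.+1).

Hypothesis cofactor_spec : forall k, [/\ is_cofactor (gp k) (hf k),
  sj k = i.+1 -> hf k != 0 /\ lm (hf k) = sm k & sj k <> i.+1 -> hf k = 0].
Hypothesis entry_sig_uniq :
  forall k1 k2, gp k1 = gp k2 -> sm k1 = sm k2 /\ sj k1 = sj k2.
Hypothesis top_entry_neq0 : forall k, sj k = i.+1 -> gp k != 0.
Hypothesis f_entry : exists k, sj k = i.+1 /\ sm k = 0%MM.
Hypothesis low_entries_GB : forall P, in_ideal f i P -> P != 0 ->
  exists k, [/\ gp k != 0, (lm (gp k) <= lm P)%MM & (sj k <= i)%N].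
Hypothesis critical_pairs : forall kq kr, sj kq = i.+1 -> gp kq <> gp kr ->
  let t := mlcm (lm (gp kq)) (lm (gp kr)) in
  let u := (t - lm (gp kq))%MM in let v := (t - lm (gp kr))%MM in
  sig_le O ((v + sm kr)%MM, sj kr) ((u + sm kq)%MM, i.+1) ->
  ((u + sm kq)%MM = (v + sm kr)%MM /\ sj kr = i.+1) \/
  (sig_lt O ((v + sm kr)%MM, sj kr) ((u + sm kq)%MM, i.+1) /\
   exists c : K, std_rep O f i.+1 G c (u + sm kq) (spoly O (gp kq) (gp kr))).

Lemma cofactor_entry k : is_cofactor (gp k) (hf k).
Proof. by case: (cofactor_spec k). Qed.

Lemma cofactor_top k : sj k = i.+1 -> hf k != 0 /\ lm (hf k) = sm k.
Proof. by case: (cofactor_spec k). Qed.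

Lemma cofactor_low k : sj k <> i.+1 -> hf k = 0.
Proof. by case: (cofactor_spec k). Qed.

Lemma is_cofactorD P1 h1 P2 h2 :
  is_cofactor P1 h1 -> is_cofactor P2 h2 -> is_cofactor (P1 + P2) (h1 + h2).
Proof.
move=> h1P1 h2P2; rewrite /is_cofactor.
have -> : P1 + P2 - (h1 + h2) * f i.+1 = (P1 - h1 * f i.+1) + (P2 - h2 * f i.+1).
  by ring.
exact: in_idealD.
Qed.

Lemma is_cofactorB P1 h1 P2 h2 :
  is_cofactor P1 h1 -> is_cofactor P2 h2 -> is_cofactor (P1 - P2) (h1 - h2).
Proof.
move=> h1P1 h2P2; rewrite /is_cofactor.
have -> : P1 - P2 - (h1 - h2) * f i.+1 = (P1 - h1 * f i.+1) - (P2 - h2 * f i.+1).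
  by ring.
exact: in_idealB.
Qed.

Lemma is_cofactorMl a P h : is_cofactor P h -> is_cofactor (a * P) (a * h).
Proof. by rewrite /is_cofactor -mulrA -mulrBr; apply: in_idealMl. Qed.

Lemma is_cofactorZ c P h : is_cofactor P h -> is_cofactor (c *: P) (c *: h).
Proof. by rewrite -!mul_mpolyC; apply: is_cofactorMl. Qed.

Lemma is_cofactor_sum (a : 'I_(size G) -> poly) :
  is_cofactor (\sum_k a k * gp k) (\sum_k a k * hf k).
Proof.
rewrite /is_cofactor mulr_suml -sumrB; apply: in_ideal_sum => k.
by rewrite -mulrA -mulrBr; apply/in_idealMl/cofactor_entry.
Qed.

Lemma msupp_lt_cofactor k a T :
  a = 0 \/ sig_lt O ((lm a + sm k)%MM, sj k) (T, i.+1) -> msupp_lt O (a * hf k) T.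
Proof.
case=> [->|]; first by rewrite mul0r; apply: all_msupp0.
rewrite /sig_lt /= => /orP[j_lt|/andP[/eqP j_eq sig_lt]].
  rewrite cofactor_low ?mulr0; first exact: all_msupp0.
  by move=> j_eq; rewrite j_eq ltnn in j_lt.
apply: msupp_le_lt_trans sig_lt; rewrite -(cofactor_top j_eq).2.
exact/msupp_leM/msupp_le_lm/msupp_le_lm.
Qed.

(* [lm P - lm g_k + sm k] is the monomial of the signature of (lm P / lm g_k) g_k. *)
Definition sig_reducible P T := exists k,
  [/\ gp k != 0, (lm (gp k) <= lm P)%MM &
      sig_le O ((lm P - lm (gp k) + sm k)%MM, sj k) (T, i.+1)].

Definition sig_reducible_lt P T := exists k,
  [/\ gp k != 0, (lm (gp k) <= lm P)%MM &
      sig_lt O ((lm P - lm (gp k) + sm k)%MM, sj k) (T, i.+1)].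

Lemma sig_reducible_ltW P T : sig_reducible_lt P T -> sig_reducible P T.
Proof.
move=> [k [k_neq0 k_div]]; rewrite /sig_lt => /orP[j_lt|/andP[j_eq sig_lt]].
  by exists k; split; rewrite // /sig_le j_lt.
by exists k; split; rewrite // /sig_le j_eq mo_ltW ?orbT.
Qed.

Lemma sig_reducible_lt_trans P T' T :
  sig_reducible P T' -> lt T' T -> sig_reducible_lt P T.
Proof.
move=> [k [k_neq0 k_div]]; rewrite /sig_le => /orP[j_lt|/andP[j_eq sig_le]] T'T.
  by exists k; split; rewrite // /sig_lt j_lt.
by exists k; split; rewrite // /sig_lt j_eq (mo_le_lt_trans sig_le T'T) orbT.
Qed.

Lemma sig_reducible_top P k w : sj k = i.+1 -> gp k != 0 ->
  lm P = (w + lm (gp k))%MM -> sig_reducible P (w + sm k).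
Proof.
move=> j_top k_neq0 lmP; exists k; split; rewrite // lmP ?lem_addl //.
by rewrite addmK /sig_le j_top eqxx mo_le_refl orbT.
Qed.

Lemma cofactor_reduce P h T k : is_cofactor P h -> msupp_le O h T ->
  sj k = i.+1 -> (sm k <= T)%MM ->
  let c := h@_T / lc O (hf k) in let w := (T - sm k)%MM in
  is_cofactor (P - c *: ('X_[w] * gp k)) (h - c *: ('X_[w] * hf k)) /\
  msupp_lt O (h - c *: ('X_[w] * hf k)) T.
Proof.
move=> hP hT j_top sm_le c w; have [hf_neq0 lm_hf] := cofactor_top j_top.
have wT : (w + lm (hf k))%MM = T by rewrite lm_hf /w submK.
split; first exact/is_cofactorB/is_cofactorZ/is_cofactorMl/cofactor_entry.
apply: msupp_lt_mcoeff0.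
  apply: all_msuppB hT _; apply: all_msuppZ.
  by rewrite -wT; apply/msupp_leXM/msupp_le_lm.
by rewrite mcoeffB mcoeffZ -{2}wT mcoeffXM divfK ?subrr ?lc_neq0.
Qed.

Lemma cofactor_of_spoly_rep kq kr (H : 'I_(size G) -> poly) :
  let t := mlcm (lm (gp kq)) (lm (gp kr)) in
  let u := (t - lm (gp kq))%MM in let v := (t - lm (gp kr))%MM in
  spoly O (gp kq) (gp kr) = \sum_k H k * gp k ->
  (forall k, H k = 0 \/ sig_lt O ((lm (H k) + sm k)%MM, sj k) ((u + sm kq)%MM, i.+1)) ->
  sig_lt O ((v + sm kr)%MM, sj kr) ((u + sm kq)%MM, i.+1) ->
  exists2 h, is_cofactor ('X_[u] * gp kq) h & msupp_lt O h (u + sm kq).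
Proof.
move=> t u v S_rep H_sig r_sig; set c := lc O (gp kq) / lc O (gp kr).
exists (\sum_k H k * hf k + c *: ('X_[v] * hf kr)).
  have -> : 'X_[u] * gp kq = spoly O (gp kq) (gp kr) + c *: ('X_[v] * gp kr).
    by rewrite subrK.
  rewrite S_rep; apply: is_cofactorD (is_cofactor_sum H) _.
  exact/is_cofactorZ/is_cofactorMl/cofactor_entry.
apply: all_msuppD; first by apply: all_msupp_sum => k; apply: msupp_lt_cofactor.
by apply/all_msuppZ/msupp_lt_cofactor; right; rewrite lm_mpolyX.
Qed.

Lemma spoly_step kq kr :
  let t := mlcm (lm (gp kq)) (lm (gp kr)) in
  let u := (t - lm (gp kq))%MM in let v := (t - lm (gp kr))%MM in
  sj kq = i.+1 -> gp kq <> gp kr -> gp kr != 0 ->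
  sig_lt O ((v + sm kr)%MM, sj kr) ((u + sm kq)%MM, i.+1) ->
  (exists2 h, is_cofactor ('X_[u] * gp kq) h & msupp_lt O h (u + sm kq)) \/
  exists k, [/\ sj k = i.+1, (sm k <= u + sm kq)%MM &
                lt (u + sm kq - sm k + lm (gp k))%MM t].
Proof.
move=> t u v q_top q_neq_r r_neq0 r_sig.
have [[sig_eq j_eq]|[_ [_ [_ [H [S_rep H_sig]]]]]] :=
  critical_pairs q_top q_neq_r (sig_ltW r_sig).
  by move: r_sig; rewrite sig_eq j_eq => /sig_lt_irr.
set S := spoly O _ _ in S_rep H_sig; rewrite -/t -/u in H_sig.
have [S0|S_neq0] := eqVneq S 0.
  left; apply: (cofactor_of_spoly_rep (H := fun=> 0)) r_sig => [|k]; last by left.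
  by rewrite -/S S0 big1 // => k _; rewrite mul0r.
case: (pickP (fun k =>
  [&& H k != 0, sj k == i.+1 & (lm (H k) + sm k == u + sm kq)%MM])).
  move=> k /and3P[Hk_neq0 /eqP k_top /eqP k_sig]; right; exists k; split=> //.
    by rewrite -k_sig lem_addl.
  have [/eqP|[lm_le _]] := H_sig k; first by rewrite (negPf Hk_neq0).
  rewrite -k_sig addmK; apply: mo_le_lt_trans lm_le _.
  exact: lm_lt S_neq0 (msupp_lt_spoly O (gp kq) r_neq0).
move=> no_top; left; apply: (cofactor_of_spoly_rep S_rep _ r_sig) => k.
have [->|Hk_neq0] := eqVneq (H k) 0; first by left.
have [/eqP|[_ le_sig]] := H_sig k; first by rewrite (negPf Hk_neq0).
right; move/negbT: (no_top k).
rewrite Hk_neq0 /=; move: le_sig; rewrite /sig_le /sig_lt /=.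
case/orP=> [->//|/andP[/eqP k_top le_sig]]; rewrite k_top eqxx /= => sig_neq.
by rewrite ltnn -/t -/u mo_lt_neqAle sig_neq le_sig.
Qed.

Lemma critical_pair_step kq kr w : sj kq = i.+1 -> gp kr != 0 ->
  (lm (gp kr) <= w + lm (gp kq))%MM ->
  sig_lt O ((w + lm (gp kq) - lm (gp kr) + sm kr)%MM, sj kr) ((w + sm kq)%MM, i.+1) ->
  (exists2 h, is_cofactor ('X_[w] * gp kq) h & msupp_lt O h (w + sm kq)) \/
  exists k, [/\ sj k = i.+1, (sm k <= w + sm kq)%MM &
                lt (w + sm kq - sm k + lm (gp k))%MM (w + lm (gp kq))].
Proof.
move=> q_top r_neq0 r_div r_sig.
have q_neq_r : gp kq <> gp kr.
  move=> qr; have [sm_eq j_eq] := entry_sig_uniq qr.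
  by move: r_sig; rewrite -qr -sm_eq -j_eq q_top addmK => /sig_lt_irr.
set L := (w + lm (gp kq))%MM in r_div r_sig *.
set t := mlcm (lm (gp kq)) (lm (gp kr)).
set u := (t - lm (gp kq))%MM; set v := (t - lm (gp kr))%MM.
have t_div : (t <= L)%MM by rewrite lem_mlcm r_div lem_addl.
set w' := (L - t)%MM.
have L_eq : L = (w' + t)%MM by rewrite /w' submK.
have w_eq : w = (w' + u)%MM by rewrite /w' /u addmBA ?lem_mlcml // submK // /L addmK.
have Lr_eq : (L - lm (gp kr))%MM = (w' + v)%MM.
  by rewrite /w' /v addmBA ?lem_mlcmr // submK.
have r_sig' : sig_lt O ((v + sm kr)%MM, sj kr) ((u + sm kq)%MM, i.+1).
  by move: r_sig; rewrite Lr_eq {1}w_eq -!addmA /sig_lt /= !mo_ltD2l.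
have [[h hX hT]|[k [k_top k_div k_lt]]] := spoly_step q_top q_neq_r r_neq0 r_sig'.
  left; exists ('X_[w'] * h); last by rewrite w_eq -addmA; apply: msupp_ltXM.
  by rewrite w_eq mpolyXD -mulrA; apply: is_cofactorMl.
right; exists k; split=> //.
  by rewrite w_eq -addmA; apply: lepm_trans k_div (lem_addl _ _).
by rewrite L_eq w_eq -addmA -(addmBA _ k_div) -addmA mo_ltD2l.
Qed.

Section Descent.
Variable T : mon.
Hypothesis IH : forall T', lt T' T -> forall P h,
  P != 0 -> is_cofactor P h -> msupp_le O h T' -> sig_reducible P T'.

Lemma sig_reducible_lt_of_cofactor P h :
  P != 0 -> is_cofactor P h -> msupp_lt O h T -> sig_reducible_lt P T.
Proof.
move=> P_neq0 hP hT; have [h0|h_neq0] := eqVneq h 0.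
  move: hP; rewrite /is_cofactor h0 mul0r subr0 => /low_entries_GB /(_ P_neq0).
  by move=> [k [k_neq0 k_div k_low]]; exists k; split; rewrite // /sig_lt /= ltnS k_low.
have lmh_lt := lm_lt h_neq0 hT.
exact: sig_reducible_lt_trans (IH lmh_lt P_neq0 hP (msupp_le_lm O h)) lmh_lt.
Qed.

Lemma sig_reducible_of_top_reducer P h k :
  P != 0 -> is_cofactor P h -> msupp_le O h T -> h@_T != 0 ->
  sj k = i.+1 -> (sm k <= T)%MM -> sig_reducible P T.
Proof.
move=> P_neq0 hP hT hT_neq0.
(* induction on the leading monomial of the multiple (T / sm k) g_k *)
move: {2}(T - sm k + lm (gp k))%MM (erefl (T - sm k + lm (gp k))%MM) => L.
elim/(well_founded_induction (mo_wf O)): L k => L IHL k L_def k_top k_div.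
have [h'P' h'T] := cofactor_reduce hP hT k_top k_div.
set c := h@_T / _ in h'P' h'T; set w := (T - sm k)%MM in L_def h'P' h'T.
have wT : (w + sm k)%MM = T by rewrite submK.
have [hf_neq0 _] := cofactor_top k_top; have q_neq0 := top_entry_neq0 k_top.
have c_neq0 : c != 0 by rewrite mulf_neq0 ?invr_eq0 ?lc_neq0.
have lm_cq : lm (c *: ('X_[w] * gp k)) = L by rewrite lmZ // lmXM.
set P' := P - _ in h'P'.
have [lmP|lmP_neq] := eqVneq (lm P) L.
  by rewrite -wT; apply: sig_reducible_top; rewrite // lmP.
have [L_le|P_le] := mo_leVge O L (lm P).
  have L_lt : lt L (lm P) by rewrite mo_lt_neqAle eq_sym lmP_neq.
  have lmP' : lm P' = lm P by rewrite lmBl // lm_cq.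
  have P'_neq0 : P' != 0 by move: L_lt; rewrite -lmP'; apply: lm_gt_neq0.
  have [kr [r_neq0 r_div r_sig]] := sig_reducible_lt_of_cofactor P'_neq0 h'P' h'T.
  by apply: sig_reducible_ltW; exists kr; rewrite -lmP'.
have P_lt : lt (lm P) L by rewrite mo_lt_neqAle lmP_neq.
have lmP' : lm P' = L by rewrite lmBr // lm_cq.
have P'_neq0 : P' != 0 by move: P_lt; rewrite -lmP'; apply: lm_gt_neq0.
have [kr [r_neq0 r_div r_sig]] := sig_reducible_lt_of_cofactor P'_neq0 h'P' h'T.
rewrite lmP' -L_def in r_div r_sig; rewrite -wT in r_sig.
have [[H HX HT]|[k' [k'_top k'_div k'_lt]]] :=
  critical_pair_step k_top r_neq0 r_div r_sig.
  apply/sig_reducible_ltW/(sig_reducible_lt_of_cofactor P_neq0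
    (h := h - c *: ('X_[w] * hf k) + c *: H)).
    by rewrite -[P](subrK (c *: ('X_[w] * gp k))); apply/is_cofactorD/is_cofactorZ.
  by apply: all_msuppD h'T _; rewrite -wT; apply: all_msuppZ.
rewrite wT L_def in k'_div k'_lt; exact: IHL _ k'_lt k' erefl k'_top k'_div.
Qed.

End Descent.

Lemma sig_reducible_of_cofactor T P h :
  P != 0 -> is_cofactor P h -> msupp_le O h T -> sig_reducible P T.
Proof.
elim/(well_founded_induction (mo_wf O)): T P h => T IH P h P_neq0 hP hT.
have [hT0|hT_neq0] := eqVneq h@_T 0.
  apply/sig_reducible_ltW/(sig_reducible_lt_of_cofactor IH P_neq0 hP).
  exact: msupp_lt_mcoeff0.
have [kf [kf_top kf_sm]] := f_entry.
apply: (sig_reducible_of_top_reducer IH P_neq0 hP hT hT_neq0 kf_top).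
by rewrite kf_sm; apply/mnm_lepP => x; rewrite mnmE.
Qed.

Lemma top_reducible_of_ideal P : in_ideal f i.+1 P -> P != 0 ->
  exists k, gp k != 0 /\ (lm (gp k) <= lm P)%MM.
Proof.
move=> /in_ideal_succ[h hP] P_neq0.
have [k [k_neq0 k_div _]] := sig_reducible_of_cofactor P_neq0 hP (msupp_le_lm O h).
by exists k.
Qed.

End SignatureCriterion.

Lemma nth_map_enum_ord (T : Type) m (F : 'I_m -> T) x0 k (k_lt : (k < m)%N) :
  nth x0 [seq F j | j <- enum 'I_m] k = F (Ordinal k_lt).
Proof.
rewrite (nth_map (Ordinal k_lt)) ?size_enum_ord //.
by congr F; apply: val_inj; rewrite /= nth_enum_ord.
Qed.

Lemma nth_map_ord_enum (T : Type) m (F : 'I_m -> T) x0 (j : 'I_m) :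
  nth x0 [seq F j | j <- enum 'I_m] j = F j.
Proof. by rewrite (nth_map j) ?size_enum_ord // nth_ord_enum. Qed.

Section Entries.
Variables (K : fieldType) (n : nat) (O : monomial_order n) (f : nat -> {mpoly K[n]}).
Variables (i M l : nat) (g : 'I_M -> {mpoly K[n]}) (sg : 'I_M -> 'X_{1..n}).
Variables (jg : 'I_M -> nat) (p : 'I_l -> {mpoly K[n]}) (d : 'I_l -> K).
Variable tau : 'I_l -> 'X_{1..n}.
Local Notation e0 := (sentry0 K n).

Definition sig_entries : seq (sentry K n) :=
  [seq SEntry 1 (sg k) (jg k) (g k) | k <- enum 'I_M] ++
  SEntry 1 0%MM i.+1 (f i.+1) ::
  [seq SEntry (d r) (tau r) i.+1 (p r) | r <- enum 'I_l].

Lemma size_sig_entries : size sig_entries = (M + l.+1)%N.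
Proof. by rewrite size_cat size_map size_enum_ord /= size_map size_enum_ord. Qed.

Lemma nth_sig_entries_f : nth e0 sig_entries M = SEntry 1 0%MM i.+1 (f i.+1).
Proof. by rewrite nth_cat size_map size_enum_ord ltnn subnn. Qed.

Lemma sig_entries_top_neq0 : f i.+1 != 0 -> (forall r, p r != 0) ->
  (forall k, (jg k <= i)%N) ->
  forall k : 'I_(size sig_entries), eidx (nth e0 sig_entries k) = i.+1 ->
  epol (nth e0 sig_entries k) != 0.
Proof.
move=> f_neq0 p_neq0 jg_le k; rewrite nth_cat size_map size_enum_ord.
case: ltnP => [k_lt|k_ge].
  rewrite nth_map_enum_ord /= => jg_eq.
  by have := jg_le (Ordinal k_lt); rewrite jg_eq ltnn.
have k_lt : (k < M + l.+1)%N by rewrite -size_sig_entries.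
case r_def: (k - M)%N => [//|r] /= _.
have r_lt : (r < l)%N by lia.
by rewrite (nth_map_enum_ord _ _ r_lt); apply: p_neq0.
Qed.

Lemma sig_entries_f : exists k : 'I_(size sig_entries),
  eidx (nth e0 sig_entries k) = i.+1 /\ emon (nth e0 sig_entries k) = 0%MM.
Proof.
have M_lt : (M < size sig_entries)%N by rewrite size_sig_entries; lia.
by exists (Ordinal M_lt); rewrite /= nth_sig_entries_f.
Qed.

Lemma sig_entries_low_GB : (forall k, (jg k <= i)%N) ->
  is_GB O (in_ideal f i) [seq g k | k <- enum 'I_M] ->
  forall P, in_ideal f i P -> P != 0 ->
  exists k : 'I_(size sig_entries),
    [/\ epol (nth e0 sig_entries k) != 0,
        (lm O (epol (nth e0 sig_entries k)) <= lm O P)%MM &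
        (eidx (nth e0 sig_entries k) <= i)%N].
Proof.
move=> jg_le [_ GB] P PI P_neq0.
have [_ /mapP[k _ ->] /andP[k_neq0 k_div]] := GB P PI P_neq0.
have k_lt : (k < size sig_entries)%N by rewrite size_sig_entries ltn_addr.
exists (Ordinal k_lt).
rewrite /= nth_cat size_map size_enum_ord ltn_ord nth_map_ord_enum.
by split; [exact: k_neq0 | exact: k_div | exact: jg_le].
Qed.

End Entries.

Theorem mainTheorem4 (K : fieldType) (n : nat) (O : monomial_order n)
  (Odeg : degree_compatible O)
  (i : nat) (f : nat -> {mpoly K[n]})
  (f_notin : ~ in_ideal f i (f i.+1))
  (M : nat) (g : 'I_M -> {mpoly K[n]})
  (g_in : forall k, in_ideal f i (g k))
  (g_GB : is_GB O (in_ideal f i) [seq g k | k <- enum 'I_M])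
  (l : nat) (p : 'I_l -> {mpoly K[n]}) (d : 'I_l -> K) (tau : 'I_l -> 'X_{1..n})
  (p_in : forall r, in_ideal f i.+1 (p r)) (p_nz : forall r, p r != 0)
  (d_nz : forall r, d r != 0)
  (sg : 'I_M -> 'X_{1..n}) (jg : 'I_M -> nat) (jg_le : forall k, (jg k <= i)%N) :
  let G : seq (sentry K n) :=
    [seq SEntry 1 (sg k) (jg k) (g k) | k <- enum 'I_M] ++
    SEntry 1 0%MM i.+1 (f i.+1) ::
    [seq SEntry (d r) (tau r) i.+1 (p r) | r <- enum 'I_l] in
  (forall k : 'I_(size G), let e := nth (sentry0 K n) G k in
     in_sig O f i.+1 (epol e) (ecoef e) (emon e) (eidx e) /\
     is_minsig O f i.+1 (epol e) (emon e) (eidx e)) ->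
  (forall k1 k2 : 'I_(size G),
     let e1 := nth (sentry0 K n) G k1 in let e2 := nth (sentry0 K n) G k2 in
     eidx e1 = i.+1 -> epol e1 <> epol e2 ->
     let t := mlcm (lm O (epol e1)) (lm O (epol e2)) in
     let u := (t - lm O (epol e1))%MM in
     let v := (t - lm O (epol e2))%MM in
     sig_le O ((v + emon e2)%MM, eidx e2) ((u + emon e1)%MM, i.+1) ->
     ((u + emon e1)%MM = (v + emon e2)%MM /\ eidx e2 = i.+1) \/
     (sig_lt O ((v + emon e2)%MM, eidx e2) ((u + emon e1)%MM, i.+1) /\
      exists c : K, std_rep O f i.+1 G c (u + emon e1)%MM
                      (spoly O (epol e1) (epol e2)))) ->
  is_GB O (in_ideal f i.+1) [seq epol e | e <- G].
Proof.
move=> G sigG pairsG.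
have [hf hf_spec] := fin_all_exists (fun k => in_sig_cofactor (sigG k).1).
have f_neq0 : f i.+1 != 0.
  by apply/eqP => f0; apply: f_notin; rewrite f0; apply: in_ideal0.
apply: is_GB_entries => [k|P PI P_neq0]; first exact: in_sig_ideal (sigG k).1.
apply: (top_reducible_of_ideal hf_spec) PI P_neq0.
- exact: minsig_entries_uniq (fun k => (sigG k).2).
- exact: sig_entries_top_neq0.
- exact: sig_entries_f.
- exact: sig_entries_low_GB.
- exact: pairsG.
Qed.
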